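(* Let $\mathcal{F}:(\mathcal{K},c)\to(\mathcal{K}',c')$ be a bilax functor with compatible Yang–Baxter operator. For every object $A$ of $\mathcal{K}$, the functor $\mathcal{F}_{A,A}:\mathcal{K}(A,A)\to\mathcal{K}'(\mathcal{F}(A),\mathcal{F}(A))$ factors through the category of Hopf bimodules over the $c'$-bimonad $B:=\mathcal{F}(\mathrm{id}_A)$ in $(\mathcal{K}'(\mathcal{F}(A),\mathcal{F}(A)),c')$: for every 1-endocell $x$ of $A$, $\mathcal{F}(x)$ with the structures below is a Hopf bimodule over $B$, and for every 2-cell $\alpha:x\Rightarrow y$ in $\mathcal{K}(A,A)$, $\mathcal{F}(\alpha)$ is a morphism of Hopf bimodules.
   Context: Conventions: $\circ$ horizontal composition, $\cdot$ vertical composition ($\beta\cdot\alpha$: first $\alpha$), $1$ identity 2-cells. A Yang–Baxter operator $c$ of a 2-category: natural 2-cells $c_{g,f}:g\circ f\Rightarrow f\circ g$ for 1-endocells of a common object, satisfying the Yang–Baxter equation and $c_{\mathrm{id},f}=c_{f,\mathrm{id}}=1$. A bilax functor $\mathcal{F}:(\mathcal{K},c)\to(\mathcal{K}',c')$ with compatible Yang–Baxter operator is a lax functor ($\mathcal{F}^2_{g,f}:\mathcal{F}(g)\circ\mathcal{F}(f)\Rightarrow\mathcal{F}(gf)$, $\mathcal{F}^0_A:\mathrm{id}\Rightarrow\mathcal{F}(\mathrm{id}_A)$) and colax functor ($\mathcal{F}_{2;g,f}:\mathcal{F}(gf)\Rightarrow\mathcal{F}(g)\circ\mathcal{F}(f)$,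 $\mathcal{F}_{0;A}$) such that $\nu_{g,f}:=c'_{\mathcal{F}(g),\mathcal{F}(f)}$ is a left and right distributive law for the lax and colax structures (e.g. $\nu_{hg,f}\cdot(\mathcal{F}^2_{h,g}\circ1)=(1\circ\mathcal{F}^2_{h,g})\cdot(\nu_{h,f}\circ1)\cdot(1\circ\nu_{g,f})$, $\nu_{\mathrm{id},f}\cdot(\mathcal{F}^0\circ1)=1\circ\mathcal{F}^0$, $(\mathcal{F}_{2;h,g}\circ1)\cdot\nu_{f,hg}=(1\circ\nu_{f,g})\cdot(\nu_{f,h}\circ1)\cdot(1\circ\mathcal{F}_{2;h,g})$, $(\mathcal{F}_0\circ1)\cdot\nu_{f,\mathrm{id}}=1\circ\mathcal{F}_0$, and mirror images), satisfies $(1\circ\mathcal{F}_0)\cdot\nu_{\mathrm{id},f}\cdot(\mathcal{F}^0\circ1)=1=(\mathcal{F}_0\circ1)\cdot\nu_{f,\mathrm{id}}\cdot(1\circ\mathcal{F}^0)$, and the bilaxity conditions $(\mathcal{F}^2_{g,h}\circ\mathcal{F}^2_{f,k})\cdot(1\circ\nu_{f,h}\circ1)\cdot(\mathcal{F}_{2;g,f}\circ\mathcal{F}_{2;h,k})=\mathcal{F}_{2;gh,fk}\cdot\mathcal{F}(1\circ c_{f,h}\circ1)\cdot\mathcal{F}^2_{gf,hk}$ for $A\xrightarrow{k}B\xrightarrow{h}B\xrightarrow{f}B\xrightarrow{g}C$, $\mathcal{F}^0\circ\mathcal{F}^0=\mathcal{F}_{2;\mathrm{id},\mathrm{id}}\cdot\mathcal{F}^0$,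 $\mathcal{F}_0\circ\mathcal{F}_0=\mathcal{F}_0\cdot\mathcal{F}^2_{\mathrm{id},\mathrm{id}}$, $\mathcal{F}_0\cdot\mathcal{F}^0=1$. $B=\mathcal{F}(\mathrm{id}_A)$ is a $c'$-bimonad with $\mu=\mathcal{F}^2_{\mathrm{id},\mathrm{id}}$, $\eta=\mathcal{F}^0_A$, $\Delta=\mathcal{F}_{2;\mathrm{id},\mathrm{id}}$, $\varepsilon=\mathcal{F}_{0;A}$. For a 1-endocell $x$ of $A$, $\mathcal{F}(x)$ has left action $\rhd=\mathcal{F}^2_{\mathrm{id},x}:B\circ\mathcal{F}(x)\Rightarrow\mathcal{F}(x)$, right action $\lhd=\mathcal{F}^2_{x,\mathrm{id}}$, left coaction $\lambda=\mathcal{F}_{2;\mathrm{id},x}:\mathcal{F}(x)\Rightarrow B\circ\mathcal{F}(x)$ and right coaction $\rho=\mathcal{F}_{2;x,\mathrm{id}}$. In the monoidal category $(\mathcal{K}'(\mathcal{F}(A),\mathcal{F}(A)),\circ)$ with Yang–Baxter operator $c'$ and $c'$-bimonad $B$, a Hopf bimodule over $B$ is an object $M$ that is a $B$-bimodule ($\rhd,\lhd$, associative, unital, commuting actions) and a $B$-bicomodule ($\lambda,\rho$, coassociative, counital, commuting coactions) satisfying the four conditions $\lambda\cdot\rhd=(\mu\circ\rhd)\cdot(1\circ c'_{B,B}\circ1)\cdot(\Delta\circ\lambda)$, $\rho\cdot\lhd=(\lhd\circ\mu)\cdot(1\circ c'_{B,B}\circ1)\cdot(\rho\circ\Delta)$,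 $\lambda\cdot\lhd=(\mu\circ\lhd)\cdot(1\circ c'_{M,B}\circ1)\cdot(\lambda\circ\Delta)$, $\rho\cdot\rhd=(\rhd\circ\mu)\cdot(1\circ c'_{B,M}\circ1)\cdot(\Delta\circ\rho)$; morphisms of Hopf bimodules are 2-cells that are left and right $B$-linear and left and right $B$-colinear. *)

(* Encoding of a strict 2-category: 2-cells between 1-cells A -> B form one
   type [cell A B] equipped with source [dom] and target [cod]; vertical
   composition [vcomp b a] (= b . a, first a) is a total operation whose laws
   are only required when the cells are composable (cod a = dom b).  This
   avoids transports along the (strict, propositional) associativity and unit
   equalities of 1-cell composition. *)

Record TwoCat := {
  obj :> Type;
  hom : obj -> obj -> Type;
  cell : obj -> obj -> Type;
  dom : forall A B, cell A B -> hom A B;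
  cod : forall A B, cell A B -> hom A B;
  id1 : forall A, hom A A;
  comp1 : forall A B C, hom B C -> hom A B -> hom A C;
  id2 : forall A B, hom A B -> cell A B;
  vcomp : forall A B, cell A B -> cell A B -> cell A B;
  hcomp : forall A B C, cell B C -> cell A B -> cell A C
}.

Arguments hom {t} A B.
Arguments cell {t} A B.
Arguments dom {t A B} a.
Arguments cod {t A B} a.
Arguments id1 {t} A.
Arguments comp1 {t A B C} g f.
Arguments id2 {t A B} f.
Arguments vcomp {t A B} b a.
Arguments hcomp {t A B C} b a.

Record is_2cat (K : TwoCat) : Prop := {
  dom_id2 : forall (A B : K) (f : hom A B), dom (id2 f) = f;
  cod_id2 : forall (A B : K) (f : hom A B), cod (id2 f) = f;
  dom_vcomp : forall (A B : K) (a b : cell A B), cod a = dom b -> dom (vcomp b a) = dom a;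
  cod_vcomp : forall (A B : K) (a b : cell A B), cod a = dom b -> cod (vcomp b a) = cod b;
  dom_hcomp : forall (A B C : K) (b : cell B C) (a : cell A B),
      dom (hcomp b a) = comp1 (dom b) (dom a);
  cod_hcomp : forall (A B C : K) (b : cell B C) (a : cell A B),
      cod (hcomp b a) = comp1 (cod b) (cod a);
  comp1A : forall (A B C D : K) (h : hom C D) (g : hom B C) (f : hom A B),
      comp1 h (comp1 g f) = comp1 (comp1 h g) f;
  comp1_id_l : forall (A B : K) (f : hom A B), comp1 (id1 B) f = f;
  comp1_id_r : forall (A B : K) (f : hom A B), comp1 f (id1 A) = f;
  vcompA : forall (A B : K) (a b c : cell A B), cod a = dom b -> cod b = dom c ->
      vcomp c (vcomp b a) = vcomp (vcomp c b) a;
  vcomp_id_l : forall (A B : K) (a : cell A B), vcomp (id2 (cod a)) a = a;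
  vcomp_id_r : forall (A B : K) (a : cell A B), vcomp a (id2 (dom a)) = a;
  hcompA : forall (A B C D : K) (c : cell C D) (b : cell B C) (a : cell A B),
      hcomp c (hcomp b a) = hcomp (hcomp c b) a;
  hcomp_id_l : forall (A B : K) (a : cell A B), hcomp (id2 (id1 B)) a = a;
  hcomp_id_r : forall (A B : K) (a : cell A B), hcomp a (id2 (id1 A)) = a;
  hcomp_id2 : forall (A B C : K) (g : hom B C) (f : hom A B),
      hcomp (id2 g) (id2 f) = id2 (comp1 g f);
  interchange : forall (A B C : K) (a b : cell B C) (a' b' : cell A B),
      cod a = dom b -> cod a' = dom b' ->
      hcomp (vcomp b a) (vcomp b' a') = vcomp (hcomp b b') (hcomp a a')
}.

Definition YBop (K : TwoCat) := forall A : obj K, hom A A -> hom A A -> cell A A.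

Record is_YB (K : TwoCat) (c : YBop K) : Prop := {
  YB_dom : forall (A : K) (g f : hom A A), dom (c A g f) = comp1 g f;
  YB_cod : forall (A : K) (g f : hom A A), cod (c A g f) = comp1 f g;
  YB_nat : forall (A : K) (b a : cell A A),
      vcomp (c A (cod b) (cod a)) (hcomp b a) = vcomp (hcomp a b) (c A (dom b) (dom a));
  YB_eq : forall (A : K) (h g f : hom A A),
      vcomp (hcomp (id2 f) (c A h g))
        (vcomp (hcomp (c A h f) (id2 g)) (hcomp (id2 h) (c A g f)))
      = vcomp (hcomp (c A g f) (id2 h))
          (vcomp (hcomp (id2 g) (c A h f)) (hcomp (c A h g) (id2 f)));
  YB_id_l : forall (A : K) (f : hom A A), c A (id1 A) f = id2 f;
  YB_id_r : forall (A : K) (f : hom A A), c A f (id1 A) = id2 f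
}.

Record Fdata (K K' : TwoCat) := {
  F0 : obj K -> obj K';
  F1 : forall A B, @hom K A B -> @hom K' (F0 A) (F0 B);
  F2 : forall A B, @cell K A B -> @cell K' (F0 A) (F0 B);
  lax2 : forall A B C, @hom K B C -> @hom K A B -> @cell K' (F0 A) (F0 C);
  lax0 : forall A, @cell K' (F0 A) (F0 A);
  colax2 : forall A B C, @hom K B C -> @hom K A B -> @cell K' (F0 A) (F0 C);
  colax0 : forall A, @cell K' (F0 A) (F0 A)
}.

Arguments F0 {K K'} f A.
Arguments F1 {K K'} f {A B} f.
Arguments F2 {K K'} f {A B} a.
Arguments lax2 {K K'} f {A B C} g f.
Arguments lax0 {K K'} f A.
Arguments colax2 {K K'} f {A B C} g f.
Arguments colax0 {K K'} f A.

Definition nu {K K' : TwoCat} (c' : YBop K') (F : Fdata K K') {B : obj K}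
  (g f : hom B B) : cell (F0 F B) (F0 F B) := c' (F0 F B) (F1 F g) (F1 F f).

Record is_bilax (K K' : TwoCat) (c : YBop K) (c' : YBop K') (F : Fdata K K') : Prop := {
  F2_dom : forall (A B : K) (a : cell A B), dom (F2 F a) = F1 F (dom a);
  F2_cod : forall (A B : K) (a : cell A B), cod (F2 F a) = F1 F (cod a);
  F2_id : forall (A B : K) (f : hom A B), F2 F (id2 f) = id2 (F1 F f);
  F2_vcomp : forall (A B : K) (a b : cell A B), cod a = dom b ->
      F2 F (vcomp b a) = vcomp (F2 F b) (F2 F a);
  lax2_dom : forall (A B C : K) (g : hom B C) (f : hom A B),
      dom (lax2 F g f) = comp1 (F1 F g) (F1 F f);
  lax2_cod : forall (A B C : K) (g : hom B C) (f : hom A B),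
      cod (lax2 F g f) = F1 F (comp1 g f);
  lax0_dom : forall A, dom (lax0 F A) = id1 (F0 F A);
  lax0_cod : forall A, cod (lax0 F A) = F1 F (id1 A);
  lax2_nat : forall (A B C : K) (b : cell B C) (a : cell A B),
      vcomp (F2 F (hcomp b a)) (lax2 F (dom b) (dom a))
      = vcomp (lax2 F (cod b) (cod a)) (hcomp (F2 F b) (F2 F a));
  lax2_assoc : forall (A B C D : K) (h : hom C D) (g : hom B C) (f : hom A B),
      vcomp (lax2 F h (comp1 g f)) (hcomp (id2 (F1 F h)) (lax2 F g f))
      = vcomp (lax2 F (comp1 h g) f) (hcomp (lax2 F h g) (id2 (F1 F f)));
  lax_unit_l : forall (A B : K) (f : hom A B),
      vcomp (lax2 F (id1 B) f) (hcomp (lax0 F B) (id2 (F1 F f))) = id2 (F1 F f);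
  lax_unit_r : forall (A B : K) (f : hom A B),
      vcomp (lax2 F f (id1 A)) (hcomp (id2 (F1 F f)) (lax0 F A)) = id2 (F1 F f);
  colax2_dom : forall (A B C : K) (g : hom B C) (f : hom A B),
      dom (colax2 F g f) = F1 F (comp1 g f);
  colax2_cod : forall (A B C : K) (g : hom B C) (f : hom A B),
      cod (colax2 F g f) = comp1 (F1 F g) (F1 F f);
  colax0_dom : forall A, dom (colax0 F A) = F1 F (id1 A);
  colax0_cod : forall A, cod (colax0 F A) = id1 (F0 F A);
  colax2_nat : forall (A B C : K) (b : cell B C) (a : cell A B),
      vcomp (hcomp (F2 F b) (F2 F a)) (colax2 F (dom b) (dom a))
      = vcomp (colax2 F (cod b) (cod a)) (F2 F (hcomp b a));
  colax2_coassoc : forall (A B C D : K) (h : hom C D) (g : hom B C) (f : hom A B),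
      vcomp (hcomp (id2 (F1 F h)) (colax2 F g f)) (colax2 F h (comp1 g f))
      = vcomp (hcomp (colax2 F h g) (id2 (F1 F f))) (colax2 F (comp1 h g) f);
  colax_unit_l : forall (A B : K) (f : hom A B),
      vcomp (hcomp (colax0 F B) (id2 (F1 F f))) (colax2 F (id1 B) f) = id2 (F1 F f);
  colax_unit_r : forall (A B : K) (f : hom A B),
      vcomp (hcomp (id2 (F1 F f)) (colax0 F A)) (colax2 F f (id1 A)) = id2 (F1 F f);
  (* nu is a left and right distributive law for the lax structure *)
  dist_lax_l : forall (B : K) (h g f : hom B B),
      vcomp (nu c' F (comp1 h g) f) (hcomp (lax2 F h g) (id2 (F1 F f)))
      = vcomp (hcomp (id2 (F1 F f)) (lax2 F h g))
          (vcomp (hcomp (nu c' F h f) (id2 (F1 F g))) (hcomp (id2 (F1 F h)) (nu c' F g f)));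
  dist_lax0_l : forall (B : K) (f : hom B B),
      vcomp (nu c' F (id1 B) f) (hcomp (lax0 F B) (id2 (F1 F f)))
      = hcomp (id2 (F1 F f)) (lax0 F B);
  dist_lax_r : forall (B : K) (h g f : hom B B),
      vcomp (nu c' F f (comp1 h g)) (hcomp (id2 (F1 F f)) (lax2 F h g))
      = vcomp (hcomp (lax2 F h g) (id2 (F1 F f)))
          (vcomp (hcomp (id2 (F1 F h)) (nu c' F f g)) (hcomp (nu c' F f h) (id2 (F1 F g))));
  dist_lax0_r : forall (B : K) (f : hom B B),
      vcomp (nu c' F f (id1 B)) (hcomp (id2 (F1 F f)) (lax0 F B))
      = hcomp (lax0 F B) (id2 (F1 F f));
  (* nu is a left and right distributive law for the colax structure *)
  dist_colax_r : forall (B : K) (h g f : hom B B),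
      vcomp (hcomp (colax2 F h g) (id2 (F1 F f))) (nu c' F f (comp1 h g))
      = vcomp (hcomp (id2 (F1 F h)) (nu c' F f g))
          (vcomp (hcomp (nu c' F f h) (id2 (F1 F g))) (hcomp (id2 (F1 F f)) (colax2 F h g)));
  dist_colax0_r : forall (B : K) (f : hom B B),
      vcomp (hcomp (colax0 F B) (id2 (F1 F f))) (nu c' F f (id1 B))
      = hcomp (id2 (F1 F f)) (colax0 F B);
  dist_colax_l : forall (B : K) (h g f : hom B B),
      vcomp (hcomp (id2 (F1 F f)) (colax2 F h g)) (nu c' F (comp1 h g) f)
      = vcomp (hcomp (nu c' F h f) (id2 (F1 F g)))
          (vcomp (hcomp (id2 (F1 F h)) (nu c' F g f)) (hcomp (colax2 F h g) (id2 (F1 F f))));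
  dist_colax0_l : forall (B : K) (f : hom B B),
      vcomp (hcomp (id2 (F1 F f)) (colax0 F B)) (nu c' F (id1 B) f)
      = hcomp (colax0 F B) (id2 (F1 F f));
  unit_counit_l : forall (B : K) (f : hom B B),
      vcomp (hcomp (id2 (F1 F f)) (colax0 F B))
        (vcomp (nu c' F (id1 B) f) (hcomp (lax0 F B) (id2 (F1 F f)))) = id2 (F1 F f);
  unit_counit_r : forall (B : K) (f : hom B B),
      vcomp (hcomp (colax0 F B) (id2 (F1 F f)))
        (vcomp (nu c' F f (id1 B)) (hcomp (id2 (F1 F f)) (lax0 F B))) = id2 (F1 F f);
  bilax : forall (A B C : K) (g : hom B C) (f h : hom B B) (k : hom A B),
      vcomp (hcomp (lax2 F g h) (lax2 F f k))
        (vcomp (hcomp (hcomp (id2 (F1 F g)) (nu c' F f h)) (id2 (F1 F k)))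
               (hcomp (colax2 F g f) (colax2 F h k)))
      = vcomp (colax2 F (comp1 g h) (comp1 f k))
          (vcomp (F2 F (hcomp (hcomp (id2 g) (c B f h)) (id2 k)))
                 (lax2 F (comp1 g f) (comp1 h k)));
  bilax_unit : forall A,
      hcomp (lax0 F A) (lax0 F A) = vcomp (colax2 F (id1 A) (id1 A)) (lax0 F A);
  bilax_counit : forall A,
      hcomp (colax0 F A) (colax0 F A) = vcomp (colax0 F A) (lax2 F (id1 A) (id1 A));
  bilax_unit_counit : forall A, vcomp (colax0 F A) (lax0 F A) = id2 (id1 (F0 F A))
}.

(* Hopf bimodules over (b, mu, eta, delta, eps) in the monoidal category
   (K'(X,X), o) with Yang-Baxter operator c'_X. *)
Section Hopf.
Context {K : TwoCat} (c : YBop K) {X : obj K} (b : hom X X)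
  (mu eta delta eps : cell X X).

Record hopf_bimodule (m : hom X X) (rhd lhd lam rho : cell X X) : Prop := {
  hb_rhd_dom : dom rhd = comp1 b m;
  hb_rhd_cod : cod rhd = m;
  hb_lhd_dom : dom lhd = comp1 m b;
  hb_lhd_cod : cod lhd = m;
  hb_lam_dom : dom lam = m;
  hb_lam_cod : cod lam = comp1 b m;
  hb_rho_dom : dom rho = m;
  hb_rho_cod : cod rho = comp1 m b;
  hb_rhd_assoc : vcomp rhd (hcomp mu (id2 m)) = vcomp rhd (hcomp (id2 b) rhd);
  hb_rhd_unit : vcomp rhd (hcomp eta (id2 m)) = id2 m;
  hb_lhd_assoc : vcomp lhd (hcomp (id2 m) mu) = vcomp lhd (hcomp lhd (id2 b));
  hb_lhd_unit : vcomp lhd (hcomp (id2 m) eta) = id2 m;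
  hb_act_comm : vcomp rhd (hcomp (id2 b) lhd) = vcomp lhd (hcomp rhd (id2 b));
  hb_lam_coassoc : vcomp (hcomp delta (id2 m)) lam = vcomp (hcomp (id2 b) lam) lam;
  hb_lam_counit : vcomp (hcomp eps (id2 m)) lam = id2 m;
  hb_rho_coassoc : vcomp (hcomp (id2 m) delta) rho = vcomp (hcomp rho (id2 b)) rho;
  hb_rho_counit : vcomp (hcomp (id2 m) eps) rho = id2 m;
  hb_coact_comm : vcomp (hcomp (id2 b) rho) lam = vcomp (hcomp lam (id2 b)) rho;
  hb_lam_rhd : vcomp lam rhd
    = vcomp (hcomp mu rhd)
        (vcomp (hcomp (hcomp (id2 b) (c X b b)) (id2 m)) (hcomp delta lam));
  hb_rho_lhd : vcomp rho lhd
    = vcomp (hcomp lhd mu)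
        (vcomp (hcomp (hcomp (id2 m) (c X b b)) (id2 b)) (hcomp rho delta));
  hb_lam_lhd : vcomp lam lhd
    = vcomp (hcomp mu lhd)
        (vcomp (hcomp (hcomp (id2 b) (c X m b)) (id2 b)) (hcomp lam delta));
  hb_rho_rhd : vcomp rho rhd
    = vcomp (hcomp rhd mu)
        (vcomp (hcomp (hcomp (id2 b) (c X b m)) (id2 b)) (hcomp delta rho))
}.

Record hopf_bimodule_hom (m : hom X X) (rhdM lhdM lamM rhoM : cell X X)
  (n : hom X X) (rhdN lhdN lamN rhoN : cell X X) (phi : cell X X) : Prop := {
  hh_dom : dom phi = m;
  hh_cod : cod phi = n;
  hh_lin_l : vcomp phi rhdM = vcomp rhdN (hcomp (id2 b) phi);
  hh_lin_r : vcomp phi lhdM = vcomp lhdN (hcomp phi (id2 b));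
  hh_colin_l : vcomp lamN phi = vcomp (hcomp (id2 b) phi) lamM;
  hh_colin_r : vcomp rhoN phi = vcomp (hcomp phi (id2 b)) rhoM
}.
End Hopf.

Arguments is_YB {K} c.
Arguments is_bilax {K K'} c c' F.


(* The actions and coactions of B on F(x) are components of the lax and colax
   structures of F at identity 1-cells.  The bimodule and bicomodule axioms are
   the (co)associativity and (co)unit laws of F with identities among the
   composed 1-cells; the four Hopf compatibilities are instances of the
   bilaxity axiom in which the braiding c_{f,h} has an identity argument, hence
   is trivial; and linearity and colinearity of F(a) are the naturality of F^2
   and F_2 against the identity 2-cell of id_A. *)

Lemma vcomp_id2_l_of_cod (K : TwoCat) (HK : is_2cat K) (A B : K)
  (a : cell A B) (f : hom A B) :
  cod a = f -> vcomp (id2 f) a = a.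
Proof. intros <-; apply (vcomp_id_l _ HK). Qed.

Section BilaxEndocells.

Variables (K K' : TwoCat) (HK : is_2cat K) (HK' : is_2cat K').
Variables (c : YBop K) (c' : YBop K') (Hc : is_YB c).
Variables (F : Fdata K K') (HF : is_bilax c c' F).

Lemma bilax_trivial_braiding (A B C : K) (g : hom B C) (f h : hom B B)
  (k : hom A B) :
  c B f h = id2 (comp1 f h) ->
  vcomp (hcomp (lax2 F g h) (lax2 F f k))
    (vcomp (hcomp (hcomp (id2 (F1 F g)) (nu c' F f h)) (id2 (F1 F k)))
           (hcomp (colax2 F g f) (colax2 F h k)))
  = vcomp (colax2 F (comp1 g h) (comp1 f k)) (lax2 F (comp1 g f) (comp1 h k)).
Proof.
  intros Hfh.
  rewrite (bilax _ _ _ _ _ HF), Hfh, !(hcomp_id2 _ HK), (F2_id _ _ _ _ _ HF).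
  rewrite (vcomp_id2_l_of_cod _ HK'); [reflexivity|].
  rewrite (lax2_cod _ _ _ _ _ HF), <- !(comp1A _ HK).
  reflexivity.
Qed.

Variable A : obj K.

Let idl (f : hom A A) : comp1 (id1 A) f = f := comp1_id_l _ HK _ _ f.
Let idr (f : hom A A) : comp1 f (id1 A) = f := comp1_id_r _ HK _ _ f.

Lemma F1_hopf_bimodule (x : hom A A) :
  hopf_bimodule c' (F1 F (id1 A))
    (lax2 F (id1 A) (id1 A)) (lax0 F A) (colax2 F (id1 A) (id1 A)) (colax0 F A)
    (F1 F x) (lax2 F (id1 A) x) (lax2 F x (id1 A))
    (colax2 F (id1 A) x) (colax2 F x (id1 A)).
Proof.
  pose proof (lax2_assoc _ _ _ _ _ HF _ _ _ _ (id1 A) (id1 A) x) as lax_iix.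
  pose proof (lax2_assoc _ _ _ _ _ HF _ _ _ _ x (id1 A) (id1 A)) as lax_xii.
  pose proof (lax2_assoc _ _ _ _ _ HF _ _ _ _ (id1 A) x (id1 A)) as lax_ixi.
  pose proof (colax2_coassoc _ _ _ _ _ HF _ _ _ _ (id1 A) (id1 A) x) as colax_iix.
  pose proof (colax2_coassoc _ _ _ _ _ HF _ _ _ _ x (id1 A) (id1 A)) as colax_xii.
  pose proof (colax2_coassoc _ _ _ _ _ HF _ _ _ _ (id1 A) x (id1 A)) as colax_ixi.
  assert (c_ii : c A (id1 A) (id1 A) = id2 (comp1 (id1 A) (id1 A)))
    by (rewrite idl; apply (YB_id_l _ _ Hc)).
  assert (c_ix : c A (id1 A) x = id2 (comp1 (id1 A) x))
    by (rewrite idl; apply (YB_id_l _ _ Hc)).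
  assert (c_xi : c A x (id1 A) = id2 (comp1 x (id1 A)))
    by (rewrite idr; apply (YB_id_r _ _ Hc)).
  pose proof (bilax_trivial_braiding _ _ _ (id1 A) (id1 A) (id1 A) x c_ii) as hopf_lam_rhd.
  pose proof (bilax_trivial_braiding _ _ _ x (id1 A) (id1 A) (id1 A) c_ii) as hopf_rho_lhd.
  pose proof (bilax_trivial_braiding _ _ _ (id1 A) x (id1 A) (id1 A) c_xi) as hopf_lam_lhd.
  pose proof (bilax_trivial_braiding _ _ _ (id1 A) (id1 A) x (id1 A) c_ix) as hopf_rho_rhd.
  clear c_ii c_ix c_xi.
  rewrite ?idl, ?idr in *.
  constructor; auto using eq_sym.
  - apply (lax2_dom _ _ _ _ _ HF).
  - rewrite (lax2_cod _ _ _ _ _ HF), idl; reflexivity.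
  - apply (lax2_dom _ _ _ _ _ HF).
  - rewrite (lax2_cod _ _ _ _ _ HF), idr; reflexivity.
  - rewrite (colax2_dom _ _ _ _ _ HF), idl; reflexivity.
  - apply (colax2_cod _ _ _ _ _ HF).
  - rewrite (colax2_dom _ _ _ _ _ HF), idr; reflexivity.
  - apply (colax2_cod _ _ _ _ _ HF).
  - apply (lax_unit_l _ _ _ _ _ HF).
  - apply (lax_unit_r _ _ _ _ _ HF).
  - apply (colax_unit_l _ _ _ _ _ HF).
  - apply (colax_unit_r _ _ _ _ _ HF).
Qed.

Lemma F2_hopf_bimodule_hom (a : cell A A) :
  hopf_bimodule_hom (F1 F (id1 A))
    (F1 F (dom a)) (lax2 F (id1 A) (dom a)) (lax2 F (dom a) (id1 A))
      (colax2 F (id1 A) (dom a)) (colax2 F (dom a) (id1 A))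
    (F1 F (cod a)) (lax2 F (id1 A) (cod a)) (lax2 F (cod a) (id1 A))
      (colax2 F (id1 A) (cod a)) (colax2 F (cod a) (id1 A))
    (F2 F a).
Proof.
  pose proof (lax2_nat _ _ _ _ _ HF _ _ _ (id2 (id1 A)) a) as lax_nat_l.
  pose proof (lax2_nat _ _ _ _ _ HF _ _ _ a (id2 (id1 A))) as lax_nat_r.
  pose proof (colax2_nat _ _ _ _ _ HF _ _ _ (id2 (id1 A)) a) as colax_nat_l.
  pose proof (colax2_nat _ _ _ _ _ HF _ _ _ a (id2 (id1 A))) as colax_nat_r.
  rewrite ?(hcomp_id_l _ HK), ?(hcomp_id_r _ HK), ?(dom_id2 _ HK), ?(cod_id2 _ HK),
    ?(F2_id _ _ _ _ _ HF) in *.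
  constructor; auto using eq_sym.
  - apply (F2_dom _ _ _ _ _ HF).
  - apply (F2_cod _ _ _ _ _ HF).
Qed.

End BilaxEndocells.

Theorem corollary4p19 (K K' : TwoCat) (HK : is_2cat K) (HK' : is_2cat K')
  (c : YBop K) (c' : YBop K') (Hc : is_YB c) (Hc' : is_YB c')
  (F : Fdata K K') (HF : is_bilax c c' F) (A : obj K) :
  (* B := F(id_A), mu = F^2_{id,id}, eta = F^0_A, Delta = F_{2;id,id}, eps = F_{0;A} *)
  (forall x : hom A A,
     hopf_bimodule c' (F1 F (id1 A))
       (lax2 F (id1 A) (id1 A)) (lax0 F A) (colax2 F (id1 A) (id1 A)) (colax0 F A)
       (F1 F x) (lax2 F (id1 A) x) (lax2 F x (id1 A))
       (colax2 F (id1 A) x) (colax2 F x (id1 A)))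
  /\
  (forall a : cell A A,
     hopf_bimodule_hom (F1 F (id1 A))
       (F1 F (dom a)) (lax2 F (id1 A) (dom a)) (lax2 F (dom a) (id1 A))
         (colax2 F (id1 A) (dom a)) (colax2 F (dom a) (id1 A))
       (F1 F (cod a)) (lax2 F (id1 A) (cod a)) (lax2 F (cod a) (id1 A))
         (colax2 F (id1 A) (cod a)) (colax2 F (cod a) (id1 A))
       (F2 F a)).
Proof.
  split.
  - exact (F1_hopf_bimodule K K' HK HK' c c' Hc F HF A).
  - exact (F2_hopf_bimodule_hom K K' HK c c' F HF A).
Qed.
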